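(* Let $G$ be an $H(4,3)$-free graph and $u^*\in V(G)$. Put $N=N(u^* )$, $W=V(G)\setminus N[u^*]$, and $A^{+}=\{v\in N: v \text{ has at least one neighbor in } N\}$. Assume that $G[A^{+}]\cong K_4$ and that every vertex of $W$ has at most one neighbor in $A^{+}$. Let $U=\{w\in W: w \text{ has exactly one neighbor in } A^{+}\}$. Then \[ e(A^{+},W)=|U|\le \alpha(G[W]). \]
   Context: $H(4,3)$ is the graph obtained from a $4$-cycle and a triangle by identifying one vertex of the $4$-cycle with one vertex of the triangle; $H(4,3)$-free means containing no subgraph isomorphic to $H(4,3)$. $N[u^*]=N(u^* )\cup\{u^*\}$. For disjoint vertex sets $X,Y$, $e(X,Y)$ is the number of edges with one end in $X$ and the other in $Y$. $\alpha(H)$ denotes the independence number of $H$, and $G[W]$ is the subgraph induced by $W$. *)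

From mathcomp Require Import all_boot.
Set Implicit Arguments. Unset Strict Implicit. Unset Printing Implicit Defensive.

Definition simple_graph (T : finType) (adj : rel T) : Prop :=
  symmetric adj /\ irreflexive adj.

(* H(4,3): 4-cycle a-b-c-d-a and triangle a-e-f sharing the vertex a.
   G contains H(4,3) as a (not necessarily induced) subgraph iff there are
   six distinct vertices carrying these seven edges. *)
Definition contains_H43 (T : finType) (adj : rel T) : Prop :=
  exists a b c d e f : T,
    uniq [:: a; b; c; d; e; f] /\
    [/\ adj a b, adj b c, adj c d, adj d a & [/\ adj a e, adj e f & adj f a]].

Definition H43_free (T : finType) (adj : rel T) : Prop := ~ contains_H43 adj.

Definition nbhd (T : finType) (adj : rel T) (u : T) : {set T} :=
  [set v | adj u v].

(* e(X,Y): number of edges with one end in X and the other in Y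
   (X, Y disjoint; counted as ordered pairs (x,y) with x in X, y in Y) *)
Definition e_between (T : finType) (adj : rel T) (X Y : {set T}) : nat :=
  #|[set p : T * T | [&& p.1 \in X, p.2 \in Y & adj p.1 p.2]]|.

Definition independent (T : finType) (adj : rel T) (S : {set T}) : bool :=
  [forall x in S, forall y in S, ~~ adj x y].

Definition alpha_in (T : finType) (adj : rel T) (W : {set T}) : nat :=
  \max_(S : {set T} | (S \subset W) && independent adj S) #|S|.

Definition induced_K4 (T : finType) (adj : rel T) (A : {set T}) : Prop :=
  #|A| = 4 /\ {in A &, forall x y, x != y -> adj x y}.

From mathcomp Require Import all_boot zify.

Set Implicit Arguments.
Unset Strict Implicit.
Unset Printing Implicit Defensive.

(* Each w in W has at most one neighbour in A+, so the edges between A+ and W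
   are in bijection with their endpoints in W, which form U.  Two adjacent
   vertices w, w' of U would produce an H(4,3): if they see the same vertex
   a of the K4, then a-w-w' is a triangle hanging off the 4-cycle
   a-b-u*-c-a through two other K4 vertices b, c; if they see distinct
   vertices a, a', then a-w-w'-a' is a 4-cycle and a with the remaining two
   K4 vertices is a triangle.  Hence U is independent in G[W]. *)

Lemma setD2_card_gt1 (T : finType) (A : {set T}) (a a' : T) :
  3 < #|A| -> exists b c, [/\ b \in A :\ a :\ a', c \in A :\ a :\ a' & b != c].
Proof.
move=> A_gt3; apply/card_gt1P.
have := cardsD1 a A; have := cardsD1 a' (A :\ a).
by case: (a \in A); case: (a' \in A :\ a) => /=; lia.
Qed.

Section H43Patterns.

Variables (T : finType) (adj : rel T).
Hypotheses (adj_sym : symmetric adj) (adj_irr : irreflexive adj).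

Ltac distinct_vertices :=
  rewrite /= !inE !negb_or andbT; repeat (apply/andP; split);
  apply/eqP => eq_vertices; subst; match goal with
  | H : is_true (?x \in ?S), H' : is_true (?x \notin ?S) |- _ => by rewrite H in H'
  | H : is_true (?x != ?x) |- _ => by rewrite eqxx in H
  | H : is_true (adj ?x ?x) |- _ => by rewrite adj_irr in H
  end.

Lemma e_between_unique_nbr (X Y : {set T}) :
    (forall y, y \in Y -> #|[set x in X | adj y x]| <= 1) ->
  e_between adj X Y = #|[set y in Y | #|[set x in X | adj y x]| == 1]|.
Proof.
move=> nbrX_le1; rewrite /e_between -(card_in_imset (f := snd)).
  apply: eq_card => y; rewrite inE; apply/imsetP/andP.
    case=> -[x y'] /[!inE] /= /and3P[xX yY xy] ->; split => //.
    rewrite eqn_leq nbrX_le1 //; apply/card_gt0P.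
    by exists x; rewrite inE xX adj_sym.
  case=> yY /cards1P[x nbr_y]; exists (x, y) => //.
  by move/setP/(_ x): nbr_y; rewrite !inE eqxx /= yY => /andP[-> ]; rewrite adj_sym.
move=> [x y] [x' y'] /[!inE] /= /and3P[xX yY xy] /and3P[x'X _ x'y] /= eq_y.
subst y'; congr pair; apply: (card_le1_eqP (nbrX_le1 y yY));
  by rewrite inE adj_sym ?xX ?x'X.
Qed.

Variable (K : {set T}).
Hypothesis (K_clique : induced_K4 adj K).

Lemma H43_of_K4_cross_edge (a a' w w' : T) :
  a \in K -> a' \in K -> a != a' -> w \notin K -> w' \notin K ->
  adj a w -> adj w w' -> adj w' a' -> contains_H43 adj.
Proof.
case: K_clique => K4 Kadj aK a'K aa' wK w'K aw ww' w'a'.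
have [b [c []]] := setD2_card_gt1 a a' (ltac:(by rewrite K4) : 3 < #|K|).
rewrite !inE => /and3P[ba' ba bK] /and3P[ca' ca cK] bc.
exists a, w, w', a', b, c; split; first by distinct_vertices.
by split=> //; [|split]; apply: Kadj => //; rewrite eq_sym.
Qed.

Lemma H43_of_K4_pendant_triangle (u a w w' : T) :
  {in K, forall x, adj u x} -> a \in K -> w \notin K -> w' \notin K ->
  w != u -> w' != u -> adj a w -> adj w w' -> adj w' a -> contains_H43 adj.
Proof.
case: K_clique => K4 Kadj uK aK wK w'K wu w'u aw ww' w'a.
have uK' : u \notin K by apply/negP => /uK; rewrite adj_irr.
have [b [c []]] := setD2_card_gt1 a a (ltac:(by rewrite K4) : 3 < #|K|).
rewrite !inE => /and3P[_ ba bK] /and3P[_ ca cK] bc.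
exists a, b, u, c, w, w'; split; first by distinct_vertices.
by split; [apply: Kadj => //; rewrite eq_sym | rewrite adj_sym; exact: uK
          | exact: uK | exact: Kadj | split].
Qed.

Lemma H43_free_K4_nbrs_nonadj (u a a' w w' : T) :
  H43_free adj -> {in K, forall x, adj u x} -> a \in K -> a' \in K ->
  w \notin K -> w' \notin K -> w != u -> w' != u ->
  adj a w -> adj a' w' -> ~~ adj w w'.
Proof.
move=> H43free uK aK a'K wK w'K wu w'u aw a'w'; apply/negP => ww'; apply: H43free.
have w'a' : adj w' a' by rewrite adj_sym.
case: (eqVneq a a') => [eq_aa' | aa'].
  by subst a'; apply: (H43_of_K4_pendant_triangle uK aK wK w'K wu w'u aw ww').
exact: (H43_of_K4_cross_edge aK a'K aa' wK w'K aw ww').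
Qed.

End H43Patterns.

Theorem corollary4p3 (T : finType) (adj : rel T) (ustar : T) :
  simple_graph adj ->
  H43_free adj ->
  let N := nbhd adj ustar in
  let W := ~: (ustar |: N) in
  let Aplus := [set v in N | [exists w in N, adj v w]] in
  induced_K4 adj Aplus ->
  (forall w, w \in W -> #|[set a in Aplus | adj w a]| <= 1) ->
  let U := [set w in W | #|[set a in Aplus | adj w a]| == 1] in
  e_between adj Aplus W = #|U| /\ #|U| <= alpha_in adj W.
Proof.
move=> [adj_sym adj_irr] H43_free N W Aplus K4 nbr_le1 U.
split; first exact: e_between_unique_nbr.
have AN : Aplus \subset N by apply/subsetP => a; rewrite inE => /andP[].
have U_nbr w : w \in U ->
    [/\ w \in W, w != ustar, w \notin Aplus & exists2 a, a \in Aplus & adj a w].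
  move=> /setIdP[wW /eqP nbr1].
  have /andP[wu wN] : (w != ustar) && (w \notin N) by move: wW; rewrite !inE negb_or.
  split=> //; first by apply: contra wN => /(subsetP AN).
  have /card_gt0P[a] : 0 < #|[set a in Aplus | adj w a]| by rewrite nbr1.
  by rewrite inE adj_sym => /andP[]; exists a.
have ustar_dom : {in Aplus, forall a, adj ustar a}.
  by move=> a /(subsetP AN); rewrite inE.
have U_indep : independent adj U.
  apply/forall_inP => w /U_nbr[_ wu wA [a aA aw]].
  apply/forall_inP => w' /U_nbr[_ w'u w'A [a' a'A a'w']].
  exact: (H43_free_K4_nbrs_nonadj adj_sym adj_irr K4 H43_free ustar_dom
            aA a'A wA w'A wu w'u aw a'w').
apply: (leq_bigmax_cond (F := fun S : {set T} => #|S|)).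
by rewrite U_indep andbT; apply/subsetP => w /U_nbr[].
Qed.
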